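(* Let $$\mathcal{Q}=\{(x,y,t)\in\mathbb{R}^3:\ 1-x^2-y^2=\cos(t)\,((1+x)^2+y^2)\}.$$ The connected components of $\mathcal{Q}\cap\{x^2+y^2<1\}$ are the sets $\mathcal{Q}_k=\{(x,y,t): x^2+y^2<1,\ 1-x^2-y^2=\cos t\,((1+x)^2+y^2),\ t\in(2\pi k-\pi/2,\,2\pi k+\pi/2)\}$, $k\in\mathbb{Z}$, and each $\mathcal{Q}_k$, viewed in $\mathbb{D}\times\mathbb{R}$, is a properly embedded minimal surface congruent (by the isometry $g\times$(vertical translation)) to the parabolic catenoid $\Psi_1(\mathbb{R}\times(0,\pi))$, where $\Psi_1(x,t)=(x,\sin t,t)\in\mathfrak{H}\times\mathbb{R}$.
   Context: $\mathbb{D}=\{z:|z|<1\}$ with metric $\frac{4|dz|^2}{(1-|z|^2)^2}$ and $\mathfrak{H}=\{x+{\rm i}y:y>0\}$ with metric $\frac{dx^2+dy^2}{y^2}$ are models of $\mathbb{H}^2$; products with $\mathbb{R}$ carry the product metric with $dt^2$. The isometry $g:\mathbb{D}\to\mathfrak{H}$ is $g(z)={\rm i}\frac{1-z}{1+z}$. Points of $\mathbb{D}\times\mathbb{R}$ are identified with $(x,y,t)\in\mathbb{R}^3$, $x^2+y^2<1$, $z=x+{\rm i}y$. *)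

From Stdlib Require Import Reals ZArith.
Open Scope R_scope.

Definition set3 := R -> R -> R -> Prop.

(* Open subsets of R^3 (sup-norm balls give the Euclidean topology). *)
Definition open3 (U : set3) : Prop :=
  forall x y t, U x y t -> exists eps, 0 < eps /\
    forall x' y' t', Rabs (x' - x) < eps -> Rabs (y' - y) < eps ->
      Rabs (t' - t) < eps -> U x' y' t'.

Definition connected3 (C : set3) : Prop :=
  ~ exists U V : set3, open3 U /\ open3 V /\
      (forall x y t, C x y t -> U x y t \/ V x y t) /\
      (exists x y t, C x y t /\ U x y t) /\
      (exists x y t, C x y t /\ V x y t) /\
      (forall x y t, C x y t -> U x y t -> V x y t -> False).

Definition connected_component3 (A C : set3) : Prop :=
  (forall x y t, C x y t -> A x y t) /\
  (exists x y t, C x y t) /\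
  connected3 C /\
  (forall C' : set3, connected3 C' ->
     (forall x y t, C x y t -> C' x y t) ->
     (forall x y t, C' x y t -> A x y t) ->
     forall x y t, C' x y t -> C x y t).

Definition DxR : set3 := fun x y t => x ^ 2 + y ^ 2 < 1.

Definition Fq (x y t : R) : R :=
  1 - x ^ 2 - y ^ 2 - cos t * ((1 + x) ^ 2 + y ^ 2).

Definition Qset : set3 := fun x y t => Fq x y t = 0.

Definition Qk (k : Z) : set3 := fun x y t =>
  x ^ 2 + y ^ 2 < 1 /\ 1 - x ^ 2 - y ^ 2 = cos t * ((1 + x) ^ 2 + y ^ 2) /\
  2 * PI * IZR k - PI / 2 < t < 2 * PI * IZR k + PI / 2.

(* Q_k is closed in D x R (properness of the embedding). *)
Definition rel_closed_in (A S : set3) : Prop :=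
  forall x y t, A x y t -> ~ S x y t -> exists eps, 0 < eps /\
    forall x' y' t', Rabs (x' - x) < eps -> Rabs (y' - y) < eps ->
      Rabs (t' - t) < eps -> ~ S x' y' t'.

Definition is_d1 (f f1 : R -> R -> R -> R) (x y t : R) : Prop :=
  derivable_pt_lim (fun s => f s y t) x (f1 x y t).
Definition is_d2 (f f2 : R -> R -> R -> R) (x y t : R) : Prop :=
  derivable_pt_lim (fun s => f x s t) y (f2 x y t).
Definition is_d3 (f f3 : R -> R -> R -> R) (x y t : R) : Prop :=
  derivable_pt_lim (fun s => f x y s) t (f3 x y t).

(* Conformal factor of the disk metric: 4|dz|^2/(1-|z|^2)^2 = lam^2 |dz|^2 *)
Definition lam (x y t : R) : R := 2 / (1 - x ^ 2 - y ^ 2).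

(* S is (an open piece of) a regular level set {F = 0} in D x R with metric
   lam^2 (dx^2+dy^2) + dt^2, which is a minimal surface: its mean curvature
   div_g (grad_g F / |grad_g F|_g) vanishes.  For the diagonal metric
   g = diag(lam^2, lam^2, 1): sqrt(det g) = lam^2, g^{11} = g^{22} = lam^-2,
   g^{33} = 1, so the unit-normal density is
   N = ( F_x/|grad F|, F_y/|grad F|, lam^2 F_t/|grad F| ),
   |grad F|_g = sqrt((F_x^2 + F_y^2)/lam^2 + F_t^2), and
   div_g(nu) = lam^-2 * (d_x N1 + d_y N2 + d_t N3). *)
Definition minimal_regular_levelset (F : R -> R -> R -> R) (S : set3) : Prop :=
  exists F1 F2 F3 : R -> R -> R -> R,
    (forall x y t, DxR x y t ->
       is_d1 F F1 x y t /\ is_d2 F F2 x y t /\ is_d3 F F3 x y t) /\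
    (forall x y t, S x y t ->
       DxR x y t /\ F x y t = 0 /\
       (F1 x y t <> 0 \/ F2 x y t <> 0 \/ F3 x y t <> 0)) /\
    let ng := fun x y t =>
      sqrt ((F1 x y t ^ 2 + F2 x y t ^ 2) / (lam x y t) ^ 2 + F3 x y t ^ 2) in
    let N1 := fun x y t => F1 x y t / ng x y t in
    let N2 := fun x y t => F2 x y t / ng x y t in
    let N3 := fun x y t => (lam x y t) ^ 2 * F3 x y t / ng x y t in
    forall x y t, S x y t -> exists d1 d2 d3,
      is_d1 N1 (fun _ _ _ => d1) x y t /\
      is_d2 N2 (fun _ _ _ => d2) x y t /\
      is_d3 N3 (fun _ _ _ => d3) x y t /\
      d1 + d2 + d3 = 0.

(* The isometry g : D -> H, g(z) = i(1-z)/(1+z), in real coordinates: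
   g(x+iy) = 2y/((1+x)^2+y^2) + i (1-x^2-y^2)/((1+x)^2+y^2). *)
Definition g_re (x y : R) : R := 2 * y / ((1 + x) ^ 2 + y ^ 2).
Definition g_im (x y : R) : R := (1 - x ^ 2 - y ^ 2) / ((1 + x) ^ 2 + y ^ 2).

(* Parabolic catenoid Psi_1(R x (0,pi)) in H x R, as points (u, v, s),
   Psi_1(x,t) = (x, sin t, t) meaning (x + i sin t, t). *)
Definition parabolic_catenoid : set3 := fun u v s =>
  exists a b, 0 < b < PI /\ u = a /\ v = sin b /\ s = b.

(* On Q ∩ (D x R) the defining equation reads cos t = (1-|z|^2)/|1+z|^2 > 0,
   so t lies in one of the open bands (2πk - π/2, 2πk + π/2), whose endpoints
   are zeros of cos.  Hence:
   - the bands (and their exteriors) separate Q ∩ (D x R), so a connected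
     subset meeting Q_k stays inside Q_k;
   - Q_k is path connected, being the image of R x (0,π) under
     Φ_k(a, b) = (g^{-1}(a + i sin b), b - shift k), which is also what makes
     g x (t ↦ t + shift k) a bijection Q_k -> Ψ_1(R x (0,π));
   so the components are exactly the Q_k.  Q_k is closed in D x R by
   continuity of Fq and the band structure.  Minimality is a computation:
   by the quotient rule the divergence of the unit normal of {Fq = 0} equals
   a numerator over 2 |grad Fq| |grad Fq|^2, and that numerator is a
   polynomial identity in (x, y, cos t, sin t) which vanishes on Q. *)

From Stdlib Require Import Reals ZArith Lra Lia Classical.
From Coquelicot Require Import Coquelicot.
Open Scope R_scope.

(* The open t-interval of Q_k: exactly the maximal intervals on which cos > 0. *)
Definition band (k : Z) (t : R) : Prop :=
  2 * PI * IZR k - PI / 2 < t < 2 * PI * IZR k + PI / 2.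

Lemma cos_add_2PIk (x : R) (k : Z) : cos (x + 2 * PI * IZR k) = cos x.
Proof.
  destruct (Z_le_gt_dec 0 k) as [Hk | Hk].
  - rewrite <- (Z2Nat.id k Hk), <- INR_IZR_INZ.
    replace (x + 2 * PI * INR (Z.to_nat k)) with (x + 2 * INR (Z.to_nat k) * PI) by ring.
    apply cos_period.
  - set (n := Z.to_nat (- k)).
    assert (Hn : IZR k = - INR n).
    { unfold n. rewrite INR_IZR_INZ, Z2Nat.id, opp_IZR by lia. ring. }
    rewrite Hn, <- (cos_period (x + 2 * PI * - INR n) n).
    f_equal; ring.
Qed.

Lemma sin_add_2PIk (x : R) (k : Z) : sin (x + 2 * PI * IZR k) = sin x.
Proof.
  rewrite !sin_cos.
  replace (PI / 2 + (x + 2 * PI * IZR k)) with ((PI / 2 + x) + 2 * PI * IZR k) by ring.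
  f_equal; apply cos_add_2PIk.
Qed.

(* Reduce t modulo 2π into [-π/2, 3π/2); cos > 0 there only on (-π/2, π/2). *)
Lemma cos_pos_band (t : R) : 0 < cos t -> exists k : Z, band k t.
Proof.
  intro Hc. pose proof PI_RGT_0 as HPI.
  set (r := (t + PI / 2) / (2 * PI)).
  destruct (archimed r) as [Hup1 Hup2].
  exists (up r - 1)%Z. unfold band. rewrite minus_IZR.
  set (u := IZR (up r)) in *.
  assert (Hr : t + PI / 2 = r * (2 * PI)) by (unfold r; field; lra).
  assert (Hlo : 2 * PI * (u - 1) - PI / 2 <= t) by nra.
  assert (Hhi : t < 2 * PI * (u - 1) + 3 * PI / 2) by nra.
  set (s := t - 2 * PI * (u - 1)).
  assert (Hcs : cos s = cos t).
  { rewrite <- (cos_add_2PIk s (up r - 1)). f_equal.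
    unfold s, u. rewrite minus_IZR. ring. }
  destruct (Rle_lt_dec (PI / 2) s) as [Hs | Hs].
  - assert (cos s <= 0) by (apply cos_le_0; unfold s in *; lra). lra.
  - destruct (Req_dec s (- (PI / 2))) as [He | He].
    + rewrite He, cos_neg, cos_PI2 in Hcs. lra.
    + unfold s in *; split; lra.
Qed.

(* The endpoints of a band are zeros of cos, so a point with cos t > 0 lies
   either inside band k or strictly on one side of it. *)
Lemma cos_pos_outside_band (k : Z) (t : R) : 0 < cos t -> ~ band k t ->
  t < 2 * PI * IZR k - PI / 2 \/ 2 * PI * IZR k + PI / 2 < t.
Proof.
  intros Hc Hb.
  assert (Elo : cos (2 * PI * IZR k - PI / 2) = 0).
  { replace (2 * PI * IZR k - PI / 2) with (- (PI / 2) + 2 * PI * IZR k) by ring.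
    rewrite cos_add_2PIk, cos_neg; apply cos_PI2. }
  assert (Ehi : cos (2 * PI * IZR k + PI / 2) = 0).
  { replace (2 * PI * IZR k + PI / 2) with (PI / 2 + 2 * PI * IZR k) by ring.
    rewrite cos_add_2PIk; apply cos_PI2. }
  destruct (Rtotal_order t (2 * PI * IZR k - PI / 2)) as [L | [E | G]];
    [now left | subst; lra |].
  destruct (Rtotal_order t (2 * PI * IZR k + PI / 2)) as [L' | [E' | G']];
    [exfalso; now apply Hb | subst; lra | now right].
Qed.

Lemma open3_band (k : Z) : open3 (fun _ _ t => band k t).
Proof.
  intros x y t [Hlo Hhi].
  exists (Rmin (t - (2 * PI * IZR k - PI / 2)) (2 * PI * IZR k + PI / 2 - t)).
  split; [apply Rmin_pos; lra |].
  intros x' y' t' _ _ Ht. apply Rabs_def2 in Ht.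
  pose proof (Rmin_l (t - (2 * PI * IZR k - PI / 2)) (2 * PI * IZR k + PI / 2 - t)).
  pose proof (Rmin_r (t - (2 * PI * IZR k - PI / 2)) (2 * PI * IZR k + PI / 2 - t)).
  unfold band; lra.
Qed.

Lemma open3_outside_band (k : Z) :
  open3 (fun _ _ t => t < 2 * PI * IZR k - PI / 2 \/ 2 * PI * IZR k + PI / 2 < t).
Proof.
  intros x y t [Ht | Ht].
  - exists (2 * PI * IZR k - PI / 2 - t). split; [lra |].
    intros x' y' t' _ _ Ht'. apply Rabs_def2 in Ht'. lra.
  - exists (t - (2 * PI * IZR k + PI / 2)). split; [lra |].
    intros x' y' t' _ _ Ht'. apply Rabs_def2 in Ht'. lra.
Qed.

Lemma open3_nonzero (f : R -> R -> R -> R) :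
  (forall p : R * R * R, continuous (fun q => f (fst (fst q)) (snd (fst q)) (snd q)) p) ->
  open3 (fun x y t => f x y t <> 0).
Proof.
  intros Hc x y t Hf.
  assert (He : 0 < Rabs (f x y t)) by now apply Rabs_pos_lt.
  destruct (proj1 (filterlim_locally _ _) (Hc (x, y, t)) (mkposreal _ He)) as [d Hd].
  exists d. split; [apply cond_pos |].
  intros x' y' t' Ex Ey Et Hz.
  specialize (Hd (x', y', t') (conj (conj Ex Ey) Et)).
  change (Rabs (f x' y' t' - f x y t) < Rabs (f x y t)) in Hd.
  rewrite Hz, Rminus_0_l, Rabs_Ropp in Hd. lra.
Qed.

Lemma ex_derive_continuity_pt (f : R -> R) (x : R) : ex_derive f x -> continuity_pt f x.
Proof. intro Hf. apply continuity_pt_filterlim. exact (ex_derive_continuous f x Hf). Qed.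

Lemma open3_path_preimage (U : set3) (g1 g2 g3 : R -> R) (s : R) :
  open3 U -> continuity_pt g1 s -> continuity_pt g2 s -> continuity_pt g3 s ->
  U (g1 s) (g2 s) (g3 s) ->
  exists d, 0 < d /\ forall s', Rabs (s' - s) < d -> U (g1 s') (g2 s') (g3 s').
Proof.
  intros HU C1 C2 C3 Hs.
  destruct (HU _ _ _ Hs) as [e [He HUe]].
  assert (Near : forall g, continuity_pt g s ->
            locally s (fun s' => Rabs (g s' - g s) < e)).
  { intros g Cg. apply continuity_pt_filterlim in Cg.
    exact (proj1 (filterlim_locally _ _) Cg (mkposreal e He)). }
  destruct (filter_and _ _ (Near _ C1) (filter_and _ _ (Near _ C2) (Near _ C3)))
    as [d Hd].
  exists d. split; [apply cond_pos |].
  intros s' Hs'. destruct (Hd s' Hs') as [E1 [E2 E3]]. now apply HUe.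
Qed.

(* Connectedness of [0,1]: it cannot be split into two disjoint relatively
   open pieces containing 0 and 1 respectively.  Proof via the supremum of
   the initial segments contained in P. *)
Lemma unit_interval_connected (P Q : R -> Prop) :
  (forall s, 0 <= s <= 1 -> P s ->
     exists d, 0 < d /\ forall s', Rabs (s' - s) < d -> P s') ->
  (forall s, 0 <= s <= 1 -> Q s ->
     exists d, 0 < d /\ forall s', Rabs (s' - s) < d -> Q s') ->
  (forall s, 0 <= s <= 1 -> P s \/ Q s) ->
  (forall s, 0 <= s <= 1 -> P s -> Q s -> False) ->
  P 0 -> Q 1 -> False.
Proof.
  intros HP HQ Hcov Hdis P0 Q1.
  set (A := fun s => 0 <= s <= 1 /\ forall s', 0 <= s' <= s -> P s').
  assert (A0 : A 0).
  { split; [lra |]. intros s' Hs'. now replace s' with 0 by lra. }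
  destruct (completeness A) as [m [Hub Hlub]];
    [exists 1; intros s [Hs _]; lra | now exists 0 |].
  assert (Hm0 : 0 <= m) by now apply Hub.
  assert (Hm1 : m <= 1) by (apply Hlub; intros s [Hs _]; lra).
  assert (Happrox : forall r, r < m -> exists s, A s /\ r < s).
  { intros r Hr. apply NNPP. intro Hn.
    enough (m <= r) by lra.
    apply Hlub. intros s Hs. apply Rnot_lt_le. intro Hrs. apply Hn. eauto. }
  destruct (Hcov m (conj Hm0 Hm1)) as [Pm | Qm].
  - (* P holds on [0, m], hence slightly beyond m unless m = 1 *)
    destruct (HP m (conj Hm0 Hm1) Pm) as [d [Hd HPd]].
    assert (Hupto : forall s', 0 <= s' <= m -> P s').
    { intros s' Hs'. destruct (Req_dec s' m) as [-> | E]; [exact Pm |].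
      destruct (Happrox s') as [s [[_ As] Hss]]; [lra |]. apply As; lra. }
    destruct (Req_dec m 1) as [-> | E].
    + exact (Hdis 1 ltac:(lra) (Hupto 1 ltac:(lra)) Q1).
    + set (m' := Rmin 1 (m + d / 2)).
      assert (m' <= m).
      { apply Hub. split; [unfold m'; split; [apply Rmin_glb; lra | apply Rmin_l] |].
        intros s' Hs'. destruct (Rle_lt_dec s' m); [apply Hupto; lra |].
        apply HPd. assert (m' <= m + d / 2) by apply Rmin_r. rewrite Rabs_right; lra. }
      assert (m < m') by (unfold m'; apply Rmin_glb_lt; lra). lra.
  - (* Q holds near m, yet P holds at points of [0,m] arbitrarily close to m *)
    destruct (HQ m (conj Hm0 Hm1) Qm) as [d [Hd HQd]].
    destruct (Req_dec m 0) as [-> | E]; [exact (Hdis 0 ltac:(lra) P0 Qm) |].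
    destruct (Happrox (m - d)) as [s [[Hs As] Hss]]; [lra |].
    assert (s <= m) by (apply Hub; split; auto).
    apply (Hdis s Hs); [apply As; lra | apply HQd; rewrite Rabs_left1; lra].
Qed.

Lemma path_connected3 (C : set3) :
  (forall x0 y0 t0 x1 y1 t1, C x0 y0 t0 -> C x1 y1 t1 ->
     exists g1 g2 g3 : R -> R,
       (forall s, 0 <= s <= 1 ->
          continuity_pt g1 s /\ continuity_pt g2 s /\ continuity_pt g3 s /\
          C (g1 s) (g2 s) (g3 s)) /\
       g1 0 = x0 /\ g2 0 = y0 /\ g3 0 = t0 /\ g1 1 = x1 /\ g2 1 = y1 /\ g3 1 = t1) ->
  connected3 C.
Proof.
  intros Hpath [U [V [HU [HV [Hcov [[x0 [y0 [t0 [C0 U0]]]]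
                                     [[x1 [y1 [t1 [C1 V1]]]] Hdis]]]]]]].
  destruct (Hpath _ _ _ _ _ _ C0 C1)
    as [g1 [g2 [g3 [Hg [E1 [E2 [E3 [E4 [E5 E6]]]]]]]]].
  apply (unit_interval_connected (fun s => U (g1 s) (g2 s) (g3 s))
                                 (fun s => V (g1 s) (g2 s) (g3 s))).
  - intros s Hs. destruct (Hg s Hs) as [c1 [c2 [c3 _]]].
    now apply open3_path_preimage.
  - intros s Hs. destruct (Hg s Hs) as [c1 [c2 [c3 _]]].
    now apply open3_path_preimage.
  - intros s Hs. apply Hcov, (Hg s Hs).
  - intros s Hs. apply Hdis, (Hg s Hs).
  - now rewrite E1, E2, E3.
  - now rewrite E4, E5, E6.
Qed.

Lemma connected3_ext (C D : set3) :
  (forall x y t, C x y t <-> D x y t) -> connected3 C -> connected3 D.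
Proof.
  intros E Hc [U [V [HU [HV [Hcov [[x0 [y0 [t0 [D0 U0]]]] [[x1 [y1 [t1 [D1 V1]]]] Hdis]]]]]]].
  apply Hc. exists U, V. repeat split; auto.
  - intros x y t H. now apply Hcov, E.
  - exists x0, y0, t0. split; [apply E |]; auto.
  - exists x1, y1, t1. split; [apply E |]; auto.
  - intros x y t H. now apply Hdis, E.
Qed.

Definition QD : set3 := fun x y t => Qset x y t /\ DxR x y t.

Lemma denom_pos (x y : R) : x ^ 2 + y ^ 2 < 1 -> 0 < (1 + x) ^ 2 + y ^ 2.
Proof. intros. nra. Qed.

(* On Q ∩ (D x R), cos t = (1 - |z|^2) / |1 + z|^2 > 0. *)
Lemma QD_cos_pos (x y t : R) : QD x y t -> 0 < cos t.
Proof.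
  intros [HQ HD]. unfold Qset, Fq in HQ. unfold DxR in HD.
  pose proof (denom_pos x y HD). nra.
Qed.

Lemma Qk_iff (k : Z) (x y t : R) : Qk k x y t <-> QD x y t /\ band k t.
Proof.
  unfold Qk, QD, Qset, Fq, DxR, band. split.
  - intros [H1 [H2 H3]]. repeat split; lra.
  - intros [[H1 H2] H3]. repeat split; lra.
Qed.

Lemma Qk_QD (k : Z) (x y t : R) : Qk k x y t -> QD x y t.
Proof. intros H%Qk_iff. apply H. Qed.

Section Fq_continuity.
Variable p : R * R * R.

Let cont_compose (f : R -> R) (g : R * R * R -> R) :
  (forall r, ex_derive f r) -> continuous g p -> continuous (fun q => f (g q)) p.
Proof.
  intros Hf Hg. apply continuous_comp; [exact Hg |].
  apply (ex_derive_continuous (K := R_AbsRing) (V := R_NormedModule)), Hf.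
Qed.

Let cont_plus (f g : R * R * R -> R) :
  continuous f p -> continuous g p -> continuous (fun q => f q + g q) p.
Proof. intros. now apply (continuous_plus (V := R_NormedModule)). Qed.

Let cont_minus (f g : R * R * R -> R) :
  continuous f p -> continuous g p -> continuous (fun q => f q - g q) p.
Proof. intros. now apply (continuous_minus (V := R_NormedModule)). Qed.

Let cont_mult (f g : R * R * R -> R) :
  continuous f p -> continuous g p -> continuous (fun q => f q * g q) p.
Proof. intros. now apply (continuous_mult (K := R_AbsRing)). Qed.

Let cont_square (g : R * R * R -> R) :
  continuous g p -> continuous (fun q => g q ^ 2) p.
Proof. intro. apply (cont_compose (fun r => r ^ 2)); [intro; auto_derive |]; auto. Qed.

Lemma Fq_continuous :
  continuous (fun q : R * R * R => Fq (fst (fst q)) (snd (fst q)) (snd q)) p.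
Proof.
  assert (Cx : continuous (fun q : R * R * R => fst (fst q)) p).
  { destruct p as [[x y] t]. apply continuous_comp; apply continuous_fst. }
  assert (Cy : continuous (fun q : R * R * R => snd (fst q)) p).
  { destruct p as [[x y] t].
    apply continuous_comp; [apply continuous_fst | apply continuous_snd]. }
  assert (Ct : continuous (fun q : R * R * R => snd q) p)
    by (destruct p as [[x y] t]; apply continuous_snd).
  unfold Fq.
  apply cont_minus; [apply cont_minus; [apply cont_minus |] | apply cont_mult].
  - apply continuous_const.
  - now apply cont_square.
  - now apply cont_square.
  - apply (cont_compose cos); [intro; auto_derive |]; auto.
  - apply cont_plus; apply cont_square; [apply cont_plus; [apply continuous_const |] |]; auto.
Qed.

End Fq_continuity.

(* Q_k is closed in D x R: off Q, use continuity of Fq; on Q but off Q_k, t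
   lies strictly outside the band k, since cos t > 0 on Q ∩ (D x R). *)
Lemma Qk_rel_closed (k : Z) : rel_closed_in DxR (Qk k).
Proof.
  intros x y t HD HnQ.
  destruct (Req_dec (Fq x y t) 0) as [HF | HF].
  - assert (HQD : QD x y t) by now split.
    assert (Hout : ~ band k t) by (intro Hb; apply HnQ, Qk_iff; auto).
    destruct (open3_outside_band k x y t (cos_pos_outside_band k t (QD_cos_pos _ _ _ HQD) Hout))
      as [e [He Hnear]].
    exists e. split; [exact He |].
    intros x' y' t' Ex Ey Et Hq%Qk_iff.
    specialize (Hnear x' y' t' Ex Ey Et). destruct Hq as [_ Hb]. unfold band in Hb. lra.
  - destruct (open3_nonzero Fq Fq_continuous x y t HF) as [e [He Hnear]].
    exists e. split; [exact He |].
    intros x' y' t' Ex Ey Et Hq%Qk_iff.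
    exact (Hnear x' y' t' Ex Ey Et (proj1 (proj1 Hq))).
Qed.

(* g^{-1}(u + iv) = (1 - u^2 - v^2 + 2iu) / (u^2 + (1+v)^2), the inverse of
   g : D -> H in real coordinates. *)
Definition ginv_re (u v : R) : R := (1 - u ^ 2 - v ^ 2) / (u ^ 2 + (1 + v) ^ 2).
Definition ginv_im (u v : R) : R := 2 * u / (u ^ 2 + (1 + v) ^ 2).

Lemma ginv_denom_pos (u v : R) : 0 < v -> 0 < u ^ 2 + (1 + v) ^ 2.
Proof. intros. nra. Qed.

Lemma ginv_norm2 (u v : R) : 0 < v ->
  ginv_re u v ^ 2 + ginv_im u v ^ 2 = 1 - 4 * v / (u ^ 2 + (1 + v) ^ 2).
Proof. intros Hv. pose proof (ginv_denom_pos u v Hv). unfold ginv_re, ginv_im. field. lra. Qed.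

Lemma ginv_denom (u v : R) : 0 < v ->
  (1 + ginv_re u v) ^ 2 + ginv_im u v ^ 2 = 4 / (u ^ 2 + (1 + v) ^ 2).
Proof. intros Hv. pose proof (ginv_denom_pos u v Hv). unfold ginv_re, ginv_im. field. lra. Qed.

Lemma g_ginv (u v : R) : 0 < v ->
  g_re (ginv_re u v) (ginv_im u v) = u /\ g_im (ginv_re u v) (ginv_im u v) = v.
Proof.
  intros Hv. pose proof (ginv_denom_pos u v Hv).
  unfold g_re, g_im. rewrite ginv_denom by exact Hv.
  replace (1 - ginv_re u v ^ 2 - ginv_im u v ^ 2)
    with (1 - (ginv_re u v ^ 2 + ginv_im u v ^ 2)) by ring.
  rewrite ginv_norm2 by exact Hv.
  unfold ginv_im. split; field; lra.
Qed.

Lemma ginv_g (x y : R) : x ^ 2 + y ^ 2 < 1 ->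
  ginv_re (g_re x y) (g_im x y) = x /\ ginv_im (g_re x y) (g_im x y) = y.
Proof.
  intros H. pose proof (denom_pos x y H).
  assert (E : g_re x y ^ 2 + (1 + g_im x y) ^ 2 = 4 / ((1 + x) ^ 2 + y ^ 2)).
  { unfold g_re, g_im. field. lra. }
  unfold ginv_re, ginv_im. rewrite E. unfold g_re, g_im. split; field; lra.
Qed.

(* The vertical translation carrying Q_k onto g^{-1} x id of the catenoid. *)
Definition shift (k : Z) : R := PI / 2 - 2 * PI * IZR k.

Lemma cos_sub_shift (k : Z) (b : R) : cos (b - shift k) = sin b.
Proof.
  unfold shift.
  replace (b - (PI / 2 - 2 * PI * IZR k)) with (- (PI / 2 - b) + 2 * PI * IZR k) by ring.
  rewrite cos_add_2PIk, cos_neg. apply cos_shift.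
Qed.

Lemma sin_add_shift (k : Z) (t : R) : sin (t + shift k) = cos t.
Proof.
  unfold shift.
  replace (t + (PI / 2 - 2 * PI * IZR k)) with ((PI / 2 - - t) + 2 * PI * - IZR k) by ring.
  rewrite <- opp_IZR, sin_add_2PIk, sin_shift. apply cos_neg.
Qed.

(* Φ_k(a, b) = (g^{-1}(a + i sin b), b - shift k) maps R x (0,π) into Q_k ... *)
Lemma param_in_Qk (k : Z) (a b : R) : 0 < b < PI ->
  Qk k (ginv_re a (sin b)) (ginv_im a (sin b)) (b - shift k).
Proof.
  intros Hb. assert (Hs : 0 < sin b) by (apply sin_gt_0; lra).
  pose proof (ginv_denom_pos a _ Hs).
  assert (0 < 4 * sin b / (a ^ 2 + (1 + sin b) ^ 2)) by (apply Rdiv_lt_0_compat; lra).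
  split; [| split].
  - rewrite ginv_norm2 by exact Hs. lra.
  - rewrite cos_sub_shift.
    replace (1 - ginv_re a (sin b) ^ 2 - ginv_im a (sin b) ^ 2)
      with (1 - (ginv_re a (sin b) ^ 2 + ginv_im a (sin b) ^ 2)) by ring.
    rewrite ginv_norm2, ginv_denom by exact Hs. field. lra.
  - unfold shift. lra.
Qed.

Lemma Qk_cos_g_im (k : Z) (x y t : R) : Qk k x y t -> cos t = g_im x y.
Proof.
  intros [H1 [H2 _]]. pose proof (denom_pos x y H1). unfold g_im. rewrite H2. field. lra.
Qed.

(* ... onto: every point of Q_k is Φ_k(Re g(z), t + shift k). *)
Lemma param_onto (k : Z) (x y t : R) : Qk k x y t ->
  0 < t + shift k < PI /\
  ginv_re (g_re x y) (sin (t + shift k)) = x /\ ginv_im (g_re x y) (sin (t + shift k)) = y.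
Proof.
  intros HQ. rewrite sin_add_shift, (Qk_cos_g_im k x y t HQ).
  destruct HQ as [H1 [_ H3]]. destruct (ginv_g x y H1) as [A B].
  split; [unfold shift; lra | auto].
Qed.

(* The image of a segment of R x (0,π) under Φ_k is a continuous path in Q_k. *)
Lemma Qk_connected (k : Z) : connected3 (Qk k).
Proof.
  apply path_connected3. intros x0 y0 t0 x1 y1 t1 Q0 Q1.
  destruct (param_onto k _ _ _ Q0) as [B0 [X0 Y0]].
  destruct (param_onto k _ _ _ Q1) as [B1 [X1 Y1]].
  set (a0 := g_re x0 y0) in *. set (a1 := g_re x1 y1) in *.
  set (b0 := t0 + shift k) in *. set (b1 := t1 + shift k) in *.
  exists (fun s => ginv_re (a0 + s * (a1 - a0)) (sin (b0 + s * (b1 - b0)))),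
         (fun s => ginv_im (a0 + s * (a1 - a0)) (sin (b0 + s * (b1 - b0)))),
         (fun s => b0 + s * (b1 - b0) - shift k).
  split.
  - intros s Hs.
    assert (Hb : 0 < b0 + s * (b1 - b0) < PI).
    { replace (b0 + s * (b1 - b0)) with ((1 - s) * b0 + s * b1) by ring.
      destruct (Req_dec s 0) as [-> | Hs0]; [lra |].
      assert (0 < s * b1 < s * PI) by (split; [apply Rmult_lt_0_compat | apply Rmult_lt_compat_l]; lra).
      assert (0 <= (1 - s) * b0 <= (1 - s) * PI) by (split; nra).
      lra. }
    assert (Hsin : 0 < sin (b0 + s * (b1 - b0))) by (apply sin_gt_0; lra).
    pose proof (ginv_denom_pos (a0 + s * (a1 - a0)) _ Hsin).
    refine (conj _ (conj _ (conj _ (param_in_Qk k _ _ Hb))));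
      apply ex_derive_continuity_pt;
      unfold ginv_re, ginv_im; auto_derive; lra.
  - rewrite !Rmult_0_l, !Rmult_1_l, !Rplus_0_r.
    replace (a0 + (a1 - a0)) with a1 by ring. replace (b0 + (b1 - b0)) with b1 by ring.
    unfold b0, b1. repeat split; auto; ring.
Qed.

Lemma Qk_congruent_catenoid (k : Z) : exists c : R,
  (forall x y t, Qk k x y t -> parabolic_catenoid (g_re x y) (g_im x y) (t + c)) /\
  (forall u v s, parabolic_catenoid u v s ->
     exists x y t, Qk k x y t /\ g_re x y = u /\ g_im x y = v /\ t + c = s).
Proof.
  exists (shift k). split.
  - intros x y t HQ. destruct (param_onto k x y t HQ) as [Hb _].
    exists (g_re x y), (t + shift k).
    split; [exact Hb | split; [reflexivity | split; [| reflexivity]]].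
    rewrite sin_add_shift. symmetry. exact (Qk_cos_g_im k x y t HQ).
  - intros u v s [a [b [Hb [-> [-> ->]]]]].
    assert (Hs : 0 < sin b) by (apply sin_gt_0; lra).
    destruct (g_ginv a (sin b) Hs) as [G1 G2].
    exists (ginv_re a (sin b)), (ginv_im a (sin b)), (b - shift k).
    split; [now apply param_in_Qk | split; [exact G1 | split; [exact G2 | ring]]].
Qed.

(* The open sets {t ∈ band k} and {t outside the closed band k} cover
   Q ∩ (D x R); so a connected subset meeting Q_k stays in Q_k. *)
Lemma connected_meeting_Qk (k : Z) (C : set3) :
  connected3 C -> (forall x y t, C x y t -> QD x y t) ->
  (exists x y t, C x y t /\ Qk k x y t) -> forall x y t, C x y t -> Qk k x y t.
Proof.
  intros Hc HCQ [x0 [y0 [t0 [C0 Q0]]]] x y t Ct.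
  apply NNPP. intro Hn. apply Hc.
  exists (fun _ _ t => band k t),
         (fun _ _ t => t < 2 * PI * IZR k - PI / 2 \/ 2 * PI * IZR k + PI / 2 < t).
  repeat split.
  - apply open3_band.
  - apply open3_outside_band.
  - intros a b s Hs.
    destruct (classic (band k s)) as [Hb | Hb]; [now left | right].
    exact (cos_pos_outside_band k s (QD_cos_pos _ _ _ (HCQ _ _ _ Hs)) Hb).
  - exists x0, y0, t0. split; [exact C0 | exact (proj2 (proj1 (Qk_iff k _ _ _) Q0))].
  - exists x, y, t. split; [exact Ct |].
    apply (cos_pos_outside_band k t (QD_cos_pos _ _ _ (HCQ _ _ _ Ct))).
    intro Hb. apply Hn, Qk_iff. auto.
  - intros a b s _ Hb Hout. unfold band in Hb. lra.
Qed.

Lemma Qk_origin (k : Z) : Qk k 0 0 (2 * PI * IZR k).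
Proof.
  pose proof PI_RGT_0.
  assert (cos (2 * PI * IZR k) = 1)
    by (rewrite <- (Rplus_0_l (2 * PI * IZR k)), cos_add_2PIk; apply cos_0).
  repeat split; [lra | rewrite H0; ring | lra | lra].
Qed.

Lemma components_are_Qk (C : set3) :
  connected_component3 QD C <-> exists k : Z, forall x y t, C x y t <-> Qk k x y t.
Proof.
  split.
  - intros [HCQ [[x [y [t Ct]]] [Hc Hmax]]].
    destruct (cos_pos_band t (QD_cos_pos _ _ _ (HCQ _ _ _ Ct))) as [k Hk].
    assert (HCk : forall x y t, C x y t -> Qk k x y t).
    { apply connected_meeting_Qk; auto. exists x, y, t. split; [| apply Qk_iff]; auto. }
    exists k. intros a b s. split; [apply HCk |].
    apply (Hmax (Qk k) (Qk_connected k) HCk (Qk_QD k)).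
  - intros [k E]. split; [| split; [| split]].
    + intros x y t H. now apply (Qk_QD k), E.
    + exists 0, 0, (2 * PI * IZR k). apply E, Qk_origin.
    + apply (connected3_ext (Qk k)); [intros; split; apply E | apply Qk_connected].
    + intros C' Hc' Hsub HC'Q x y t Ht. apply E.
      apply (connected_meeting_Qk k C' Hc' HC'Q); auto.
      exists 0, 0, (2 * PI * IZR k). split; [apply Hsub, E |]; apply Qk_origin.
Qed.

Lemma derivable_pt_lim_div_sqrt (f g : R -> R) (x f' g' : R) :
  derivable_pt_lim f x f' -> derivable_pt_lim g x g' -> 0 < g x ->
  derivable_pt_lim (fun s => f s / sqrt (g s)) x
    (f' / sqrt (g x) - f x * g' / (2 * sqrt (g x) * g x)).
Proof.
  intros Hf Hg Hpos.
  assert (Hr : 0 < sqrt (g x)) by now apply sqrt_lt_R0.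
  assert (Hs : derivable_pt_lim (fun s => sqrt (g s)) x (/ (2 * sqrt (g x)) * g')).
  { apply (derivable_pt_lim_comp g sqrt); [exact Hg | now apply derivable_pt_lim_sqrt]. }
  pose proof (derivable_pt_lim_div f (fun s => sqrt (g s)) x f' _ Hf Hs ltac:(lra)) as H.
  unfold div_fct in H.
  replace (f' / sqrt (g x) - f x * g' / (2 * sqrt (g x) * g x))
    with ((f' * sqrt (g x) - / (2 * sqrt (g x)) * g' * f x) / (sqrt (g x))²); [exact H |].
  rewrite Rsqr_sqrt by lra.
  assert (Hgr : g x = sqrt (g x) * sqrt (g x)) by (rewrite sqrt_sqrt; lra).
  set (r := sqrt (g x)) in *. rewrite Hgr. field. lra.
Qed.

(* The gradient of Fq, written in terms of c = cos t and s = sin t so that the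
   final curvature identity is a polynomial identity in (x, y, c, s). *)
Definition Fx (x y c : R) : R := - 2 * x - 2 * c * (1 + x).
Definition Fy (x y c : R) : R := - 2 * y - 2 * c * y.
Definition Ft (x y s : R) : R := s * ((1 + x) ^ 2 + y ^ 2).

Lemma Fq_partials (x y t : R) :
  is_d1 Fq (fun x y t => Fx x y (cos t)) x y t /\
  is_d2 Fq (fun x y t => Fy x y (cos t)) x y t /\
  is_d3 Fq (fun x y t => Ft x y (sin t)) x y t.
Proof.
  unfold is_d1, is_d2, is_d3, Fq, Fx, Fy, Ft.
  split; [| split]; apply is_derive_Reals; auto_derive; auto; ring.
Qed.

(* lam^2, and |grad Fq|^2 = (Fx^2 + Fy^2)/lam^2 + Ft^2 in the product metric. *)
Definition lam2 (x y : R) : R := (2 / (1 - x ^ 2 - y ^ 2)) ^ 2.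

Definition G (x y c s : R) : R := (Fx x y c ^ 2 + Fy x y c ^ 2) / lam2 x y + Ft x y s ^ 2.

(* Partial derivatives of (x, y, t) ↦ G x y (cos t) (sin t); note that
   d/dx (1/lam^2) = - x (1 - x^2 - y^2). *)
Definition G_x (x y c s : R) : R :=
  2 * Fx x y c * (- 2 - 2 * c) / lam2 x y
  - (Fx x y c ^ 2 + Fy x y c ^ 2) * x * (1 - x ^ 2 - y ^ 2) + 4 * Ft x y s * s * (1 + x).
Definition G_y (x y c s : R) : R :=
  2 * Fy x y c * (- 2 - 2 * c) / lam2 x y
  - (Fx x y c ^ 2 + Fy x y c ^ 2) * y * (1 - x ^ 2 - y ^ 2) + 4 * Ft x y s * s * y.
Definition G_t (x y c s : R) : R :=
  4 * s * (Fx x y c * (1 + x) + Fy x y c * y) / lam2 x y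
  + 2 * Ft x y s * c * ((1 + x) ^ 2 + y ^ 2).

(* Side conditions of [auto_derive]/[field] in D x R: products and inverses
   of nonzero constants and of (normal forms of) a hypothesis [Hp : e <> 0]. *)
Ltac nonzero_from Hp :=
  match goal with
  | |- True => exact I
  | |- _ /\ _ => split; nonzero_from Hp
  | |- _ * _ <> 0 => apply Rmult_integral_contrapositive_currified; nonzero_from Hp
  | |- / _ <> 0 => apply Rinv_neq_0_compat; nonzero_from Hp
  | |- _ => lra || (let E := fresh "E" in intro E; apply Hp; rewrite <- E; ring)
  end.

Lemma G_partials (x y t : R) : x ^ 2 + y ^ 2 < 1 ->
  is_d1 (fun x y t => G x y (cos t) (sin t)) (fun x y t => G_x x y (cos t) (sin t)) x y t /\
  is_d2 (fun x y t => G x y (cos t) (sin t)) (fun x y t => G_y x y (cos t) (sin t)) x y t /\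
  is_d3 (fun x y t => G x y (cos t) (sin t)) (fun x y t => G_t x y (cos t) (sin t)) x y t.
Proof.
  intro HD. assert (Hp : 1 - x ^ 2 - y ^ 2 <> 0) by lra.
  unfold is_d1, is_d2, is_d3, G, G_x, G_y, G_t, Fx, Fy, Ft, lam2.
  split; [| split]; apply is_derive_Reals;
    (auto_derive; [nonzero_from Hp | field; nonzero_from Hp]).
Qed.

(* 2 r G times the divergence sum d1 + d2 + d3 of the unit normal, r = sqrt G. *)
Definition mean_curvature_numerator (x y c s : R) : R :=
  2 * (2 * (- 2 - 2 * c) + lam2 x y * (c * ((1 + x) ^ 2 + y ^ 2))) * G x y c s
  - (Fx x y c * G_x x y c s + Fy x y c * G_y x y c s + lam2 x y * Ft x y s * G_t x y c s).

(* The numerator depends on s only through s^2. *)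
Lemma mean_curvature_numerator_even (x y c s : R) : 1 - x ^ 2 - y ^ 2 <> 0 ->
  mean_curvature_numerator x y c s =
  mean_curvature_numerator x y c 0 +
  s ^ 2 * (mean_curvature_numerator x y c 1 - mean_curvature_numerator x y c 0).
Proof.
  intro Hp. unfold mean_curvature_numerator, G, G_x, G_y, G_t, Ft, lam2.
  field. nonzero_from Hp.
Qed.

Lemma mean_curvature_numerator_zero (x y c s : R) :
  x ^ 2 + y ^ 2 < 1 -> c * ((1 + x) ^ 2 + y ^ 2) = 1 - x ^ 2 - y ^ 2 -> s ^ 2 + c ^ 2 = 1 ->
  mean_curvature_numerator x y c s = 0.
Proof.
  intros HD Hc Hs. pose proof (denom_pos x y HD) as Hpos.
  assert (Hp : 1 - x ^ 2 - y ^ 2 <> 0) by lra.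
  rewrite mean_curvature_numerator_even by exact Hp.
  replace (s ^ 2) with (1 - c ^ 2) by lra.
  replace c with ((1 - x ^ 2 - y ^ 2) / ((1 + x) ^ 2 + y ^ 2)) by (field_simplify_eq; lra).
  unfold mean_curvature_numerator, G, G_x, G_y, G_t, Ft, Fx, Fy, lam2.
  field. split; [lra | nonzero_from Hp].
Qed.

Lemma Qk_regular (k : Z) (x y t : R) : Qk k x y t ->
  Fx x y (cos t) <> 0 \/ Fy x y (cos t) <> 0 \/ Ft x y (sin t) <> 0.
Proof.
  intros HQ. pose proof (QD_cos_pos _ _ _ (Qk_QD k x y t HQ)) as Hc.
  destruct HQ as [HD [HQ _]]. pose proof (denom_pos x y HD).
  destruct (Req_dec (Ft x y (sin t)) 0) as [E3 | E3]; [| now right; right].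
  assert (Hs : sin t = 0) by (unfold Ft in E3; destruct (Rmult_integral _ _ E3); lra).
  assert (Hc1 : cos t = 1) by (pose proof (sin2_cos2 t) as S; rewrite Hs in S; unfold Rsqr in S; nra).
  destruct (Req_dec (Fx x y (cos t)) 0) as [E1 | E1]; [| now left].
  right; left. unfold Fx, Fy in *. rewrite Hc1 in *. intro E2.
  assert (x = - 1 / 2) by lra. assert (y = 0) by lra. subst. lra.
Qed.

Lemma G_pos (k : Z) (x y t : R) : Qk k x y t -> 0 < G x y (cos t) (sin t).
Proof.
  intros HQ. pose proof (Qk_regular k x y t HQ) as Hreg. destruct HQ as [HD _].
  assert (Hl : 0 < lam2 x y) by (unfold lam2; apply pow2_gt_0, Rgt_not_eq, Rdiv_lt_0_compat; lra).
  unfold G. set (a := Fx x y (cos t)) in *. set (b := Fy x y (cos t)) in *.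
  set (c := Ft x y (sin t)) in *.
  assert (0 <= (a ^ 2 + b ^ 2) / lam2 x y) by (apply Rdiv_le_0_compat; nra).
  destruct Hreg as [Ha | [Hb | Hc]].
  - assert (0 < a ^ 2) by now apply pow2_gt_0.
    assert (0 < (a ^ 2 + b ^ 2) / lam2 x y) by (apply Rdiv_lt_0_compat; nra). nra.
  - assert (0 < b ^ 2) by now apply pow2_gt_0.
    assert (0 < (a ^ 2 + b ^ 2) / lam2 x y) by (apply Rdiv_lt_0_compat; nra). nra.
  - assert (0 < c ^ 2) by now apply pow2_gt_0. nra.
Qed.

(* The divergence of the unit normal of {Fq = 0} vanishes on Q_k: each
   d_i N_i is computed by the quotient rule, and their sum is the mean
   curvature numerator divided by 2 r G. *)
Lemma Qk_minimal (k : Z) : minimal_regular_levelset Fq (Qk k).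
Proof.
  exists (fun x y t => Fx x y (cos t)), (fun x y t => Fy x y (cos t)),
         (fun x y t => Ft x y (sin t)).
  split; [| split].
  - intros x y t _. apply Fq_partials.
  - intros x y t HQ. destruct (Qk_QD k x y t HQ) as [HF HD].
    repeat split; [exact HD | exact HF | apply (Qk_regular k x y t HQ)].
  - intros ng N1 N2 N3 x y t HQ.
    pose proof (G_pos k x y t HQ) as HG.
    pose proof HQ as [HD [Hc _]].
    destruct (G_partials x y t HD) as [Gx [Gy Gt]].
    set (r := sqrt (G x y (cos t) (sin t))).
    assert (Hr : 0 < r) by now apply sqrt_lt_R0.
    set (c := cos t) in *. set (s := sin t) in *.
    exists ((- 2 - 2 * c) / r - Fx x y c * G_x x y c s / (2 * r * G x y c s)),
           ((- 2 - 2 * c) / r - Fy x y c * G_y x y c s / (2 * r * G x y c s)),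
           (lam2 x y * (c * ((1 + x) ^ 2 + y ^ 2)) / r
            - lam2 x y * Ft x y s * G_t x y c s / (2 * r * G x y c s)).
    split; [| split; [| split]].
    + apply (derivable_pt_lim_div_sqrt (fun x => Fx x y c) (fun x => G x y c s));
        [| exact Gx | exact HG].
      unfold Fx. apply is_derive_Reals. auto_derive; auto. ring.
    + apply (derivable_pt_lim_div_sqrt (fun y => Fy x y c) (fun y => G x y c s));
        [| exact Gy | exact HG].
      unfold Fy. apply is_derive_Reals. auto_derive; auto. ring.
    + apply (derivable_pt_lim_div_sqrt (fun t => lam2 x y * Ft x y (sin t))
               (fun t => G x y (cos t) (sin t))); [| exact Gt | exact HG].
      unfold Ft. apply is_derive_Reals. auto_derive; auto. unfold c. ring.
    + assert (HN : mean_curvature_numerator x y c s = 0).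
      { apply mean_curvature_numerator_zero; [exact HD | lra |].
        pose proof (sin2_cos2 t) as S. unfold Rsqr in S. unfold c, s. lra. }
      unfold mean_curvature_numerator in HN.
      apply (Rmult_eq_reg_r (2 * r * G x y c s));
        [| apply Rmult_integral_contrapositive_currified; lra].
      rewrite Rmult_0_l, <- HN. field. lra.
Qed.

Theorem mainTheorem5 :
  (* the connected components of Q ∩ {x^2+y^2<1} are exactly the Q_k *)
  (forall C : set3,
     connected_component3 (fun x y t => Qset x y t /\ DxR x y t) C <->
     exists k : Z, forall x y t, C x y t <-> Qk k x y t) /\
  (forall k : Z,
     (* properly embedded (closed in D x R, regular level set) minimal surface *)
     rel_closed_in DxR (Qk k) /\
     minimal_regular_levelset Fq (Qk k) /\
     (* congruent to Psi_1(R x (0,pi)) via g x (vertical translation) *)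
     exists c : R,
       (forall x y t, Qk k x y t ->
          parabolic_catenoid (g_re x y) (g_im x y) (t + c)) /\
       (forall u v s, parabolic_catenoid u v s ->
          exists x y t, Qk k x y t /\
            g_re x y = u /\ g_im x y = v /\ t + c = s)).
Proof.
  split.
  - exact components_are_Qk.
  - intro k. split; [| split].
    + apply Qk_rel_closed.
    + apply Qk_minimal.
    + apply Qk_congruent_catenoid.
Qed.
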